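(* Let $\Theta=\bigcup_{n\in\mathbb N}\mathbb Z^n$, $d,M,\mathfrak d\in\mathbb N$, $T\in(0,\infty)$, $a\in C(\mathbb R,\mathbb R)$, and $\mathfrak J,\mathbf F,\mathbf G\in\mathbf N$ with $\mathcal D(\mathfrak J)=(1,\mathfrak d,1)$, $\mathcal R_a(\mathfrak J)=\mathrm{id}_{\mathbb R}$, $\mathcal R_a(\mathbf F)\in C(\mathbb R,\mathbb R)$, $\mathcal R_a(\mathbf G)\in C(\mathbb R^d,\mathbb R)$. For every $\theta\in\Theta$ let $\mathcal U^\theta\colon[0,T]\to[0,T]$ and $W^\theta\colon[-T,T]\to\mathbb R^d$ be functions (write $\mathcal U^\theta_t=\mathcal U^\theta(t)$, $W^\theta_s=W^\theta(s)$; for $\theta\in\Theta$ and integers $i,k$, $(\theta,i,k)\in\Theta$ denotes the concatenated tuple). For $\theta\in\Theta$, $n\in\mathbb N_0$ let $U^\theta_n\colon[0,T]\times\mathbb R^d\to\mathbb R$ satisfy for all $t\in[0,T]$, $x\in\mathbb R^d$ $$U^\theta_n(t,x)=\frac{\mathbb 1_{\mathbb N}(n)}{M^n}\sum_{k=1}^{M^n}(\mathcal R_a(\mathbf G))\bigl(x+W^{(\theta,0,-k)}_{T-t}\bigr)+\sum_{i=0}^{n-1}\frac{T-t}{M^{n-i}}\sum_{k=1}^{M^{n-i}}\Bigl[(\mathcal R_a(\mathbf F)\circ U^{(\theta,i,k)}_i)-\mathbb 1_{\mathbb N}(i)(\mathcal R_a(\mathbf F)\circ U^{(\theta,-i,k)}_{\max\{i-1,0\}})\Bigr]\bigl(\mathcal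 U^{(\theta,i,k)}_t,x+W^{(\theta,i,k)}_{\mathcal U^{(\theta,i,k)}_t-t}\bigr),$$ and let $\mathbf U^\theta_{n,t}\in\mathbf N$, $n\in\mathbb N_0$, $t\in[0,T]$, $\theta\in\Theta$, satisfy $\mathbf U^\theta_{0,t}=((0\ 0\ \cdots\ 0),0)\in\mathbb R^{1\times d}\times\mathbb R^1$ and, for $n\in\mathbb N$, $$\mathbf U^\theta_{n,t}=\Bigl[\bigoplus_{k=1}^{M^n}\bigl(\tfrac1{M^n}\circledast(\mathbf G\bullet\mathbf A_{\operatorname I_d,W^{(\theta,0,-k)}_{T-t}})\bigr)\Bigr]\boxplus_{\mathfrak J}\Bigl[\mathop{\boxplus}_{i=0,\mathfrak J}^{n-1}\Bigl(\tfrac{T-t}{M^{n-i}}\circledast\Bigl(\mathop{\boxplus}_{k=1,\mathfrak J}^{M^{n-i}}\bigl((\mathbf F\bullet\mathbf U^{(\theta,i,k)}_{i,\mathcal U^{(\theta,i,k)}_t})\bullet\mathbf A_{\operatorname I_d,W^{(\theta,i,k)}_{\mathcal U^{(\theta,i,k)}_t-t}}\bigr)\Bigr)\Bigr)\Bigr]\boxplus_{\mathfrak J}\Bigl[\mathop{\boxplus}_{i=0,\mathfrak J}^{n-1}\Bigl(\tfrac{(t-T)\mathbb 1_{\mathbb N}(i)}{M^{n-i}}\circledast\Bigl(\mathop{\boxplus}_{k=1,\mathfrak J}^{M^{n-i}}\bigl((\mathbf F\bullet\mathbf U^{(\theta,-i,k)}_{\max\{i-1,0\},\mathcal U^{(\theta,i,k)}_t})\bullet\mathbf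 A_{\operatorname I_d,W^{(\theta,i,k)}_{\mathcal U^{(\theta,i,k)}_t-t}}\bigr)\Bigr)\Bigr)\Bigr].$$ Then for all $\theta,\theta_1,\theta_2\in\Theta$, $n\in\mathbb N_0$, $t,t_1,t_2\in[0,T]$, $x\in\mathbb R^d$: (i) $\mathcal D(\mathbf U^{\theta_1}_{n,t_1})=\mathcal D(\mathbf U^{\theta_2}_{n,t_2})$; (ii) $\mathcal R_a(\mathbf U^\theta_{n,t})\in C(\mathbb R^d,\mathbb R)$; (iii) $\mathcal L(\mathbf U^\theta_{n,t})\le\max\{\mathfrak d,\mathcal L(\mathbf G)\}+n\mathcal H(\mathbf F)$; (iv) $|||\mathcal D(\mathbf U^\theta_{n,t})|||\le\max\{\mathfrak d,|||\mathcal D(\mathbf F)|||,|||\mathcal D(\mathbf G)|||\}(3M)^n$; (v) $U^\theta_n(t,x)=(\mathcal R_a(\mathbf U^\theta_{n,t}))(x)$; (vi) $\mathcal P(\mathbf U^\theta_{n,t})\le2(\max\{\mathfrak d,\mathcal L(\mathbf G)\}+n\mathcal H(\mathbf F))\bigl(\max\{\mathfrak d,|||\mathcal D(\mathbf F)|||,|||\mathcal D(\mathbf G)|||\}\bigr)^2(3M)^{2n}$.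
   Context: Artificial neural networks (ANNs). Let $\mathbb N=\{1,2,\dots\}$, $\mathbb N_0=\mathbb N\cup\{0\}$, and $\mathbf N=\bigcup_{L\in\mathbb N}\bigcup_{l_0,\dots,l_L\in\mathbb N}\prod_{k=1}^L(\mathbb R^{l_k\times l_{k-1}}\times\mathbb R^{l_k})$. For $\Phi=((W_1,B_1),\dots,(W_L,B_L))\in\prod_{k=1}^L(\mathbb R^{l_k\times l_{k-1}}\times\mathbb R^{l_k})$ set $\mathcal P(\Phi)=\sum_{k=1}^Ll_k(l_{k-1}+1)$, $\mathcal L(\Phi)=L$, $\mathcal I(\Phi)=l_0$, $\mathcal O(\Phi)=l_L$, $\mathcal H(\Phi)=L-1$, $\mathcal D(\Phi)=(l_0,\dots,l_L)$, and for $n\in\mathbb N_0$ let $\mathbb D_n(\Phi)=l_n$ if $n\le L$ and $0$ otherwise. For $x\in\mathbb R^m$, $|||x|||=\max_i|x_i|$. For $a\in C(\mathbb R,\mathbb R)$ the realization $\mathcal R_a(\Phi)\in C(\mathbb R^{l_0},\mathbb R^{l_L})$ is $(\mathcal R_a(\Phi))(x_0)=W_Lx_{L-1}+B_L$ with $x_k=\mathfrak M_{a,l_k}(W_kx_{k-1}+B_k)$, $k=1,\dots,L-1$, where $\mathfrak M_{a,m}(y_1,\dots,y_m)=(a(y_1),\dots,a(y_m))$. Operations on ANNs. $\operatorname I_n$ is the $n\times n$ identity matrix. For $W\in\mathbb R^{m\times n}$, $B\in\mathbb R^m$ let $\mathbf A_{W,B}=((W,B))\in\mathbf N$ (one layer;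 for reals $w,b$, $\mathbf A_{w,b}$ has $1\times1$ weight $w$ and bias $b$). Composition: for $\Phi_1=((W_1,B_1),\dots,(W_L,B_L))$ and $\Phi_2=((\mathscr W_1,\mathscr B_1),\dots,(\mathscr W_{\mathfrak L},\mathscr B_{\mathfrak L}))$ with $\mathcal I(\Phi_1)=\mathcal O(\Phi_2)$, $\Phi_1\bullet\Phi_2=((\mathscr W_1,\mathscr B_1),\dots,(\mathscr W_{\mathfrak L-1},\mathscr B_{\mathfrak L-1}),(W_1\mathscr W_{\mathfrak L},W_1\mathscr B_{\mathfrak L}+B_1),(W_2,B_2),\dots,(W_L,B_L))$ (an ANN of length $L+\mathfrak L-1$). Scalar multiplication: $\lambda\circledast\Phi=\mathbf A_{\lambda\operatorname I_{\mathcal O(\Phi)},0}\bullet\Phi$. Parallelization: for $\Phi_j=((W_{j,1},B_{j,1}),\dots,(W_{j,L},B_{j,L}))$, $j=1,\dots,n$, of equal length $L$, $\mathbf P_n(\Phi_1,\dots,\Phi_n)$ is the ANN whose $k$-th layer is $(\operatorname{diag}(W_{1,k},\dots,W_{n,k}),(B_{1,k},\dots,B_{n,k}))$ (block-diagonal weight matrix, stacked bias). $\mathfrak S_{m,n}=\mathbf A_{(\operatorname I_m\,\cdots\,\operatorname I_m),0}\in\mathbb R^{m\times nm}\times\mathbb R^m$ and $\mathfrak T_{m,n}=\mathbf A_{(\operatorname I_m\,\cdots\,\operatorname I_m)^{\top},0}$ ($n$ identity blocks). Sum of ANNs of equal length: if $\Phi_u,\dots,\Phi_v$ all have the same $\mathcal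 L,\mathcal I,\mathcal O$, then $\bigoplus_{k=u}^v\Phi_k=\mathfrak S_{\mathcal O(\Phi_u),v-u+1}\bullet\bigl([\mathbf P_{v-u+1}(\Phi_u,\dots,\Phi_v)]\bullet\mathfrak T_{\mathcal I(\Phi_u),v-u+1}\bigr)$. Powers: for $\mathcal I(\Psi)=\mathcal O(\Psi)$, $\Psi^{\bullet0}=((\operatorname I_{\mathcal O(\Psi)},0))$ and $\Psi^{\bullet n}=\Psi\bullet\Psi^{\bullet(n-1)}$. Extension: for $\mathcal L(\Phi)\le L$ and $\mathcal O(\Phi)=\mathcal I(\Psi)=\mathcal O(\Psi)$, $\mathcal E_{L,\Psi}(\Phi)=\Psi^{\bullet(L-\mathcal L(\Phi))}\bullet\Phi$. Sum of ANNs of different lengths: if $\mathcal I(\Phi_k)=\mathcal I(\Phi_u)$, $\mathcal O(\Phi_k)=\mathcal I(\Psi)=\mathcal O(\Psi)$ for all $k$ and $\mathcal H(\Psi)=1$, then $\mathop{\boxplus}_{k=u,\Psi}^v\Phi_k=\bigoplus_{k=u}^v\mathcal E_{\max_{j\in\{u,\dots,v\}}\mathcal L(\Phi_j),\Psi}(\Phi_k)$, also written $\Phi_u\boxplus_\Psi\Phi_{u+1}\boxplus_\Psi\cdots\boxplus_\Psi\Phi_v$. *)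

From HB Require Import structures.
From mathcomp Require Import all_boot all_order all_algebra.
From mathcomp Require Import all_classical all_reals all_analysis.

Set Implicit Arguments.
Unset Strict Implicit.
Unset Printing Implicit Defensive.
Import Order.TTheory GRing.Theory Num.Theory.
Local Open Scope ring_scope.

(* A value of type
   [ann R i o] is a list of affine layers ((W_1,B_1),...,(W_L,B_L)),
   W_k : 'M_(l_k, l_(k-1)), B_k : 'cV_(l_k), with l_0 = i, l_L = o.
   [ALast W B] is the final layer; [ACons W B Phi] prepends a layer.
   (Membership in the set \mathbf N additionally requires all l_k >= 1,
   see [ann_pos].) *)
Inductive ann (R : Type) : nat -> nat -> Type :=
| ALast : forall i o, 'M[R]_(o, i) -> 'cV[R]_o -> ann R i o
| ACons : forall i h o, 'M[R]_(h, i) -> 'cV[R]_h -> ann R h o -> ann R i o.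
Arguments ALast {R i o}.
Arguments ACons {R i h o}.

Section ANN.
Variable R : pzRingType.

Fixpoint dims i o (Phi : ann R i o) : seq nat :=
  match Phi with
  | ALast i o _ _ => [:: i; o]
  | ACons i _ _ _ _ Phi' => i :: dims Phi'
  end.

Fixpoint alen i o (Phi : ann R i o) : nat :=
  match Phi with
  | ALast _ _ _ _ => 1%N
  | ACons _ _ _ _ _ Phi' => (alen Phi').+1
  end.

Definition ahidden i o (Phi : ann R i o) : nat := (alen Phi).-1.

Fixpoint aparams i o (Phi : ann R i o) : nat :=
  match Phi with
  | ALast i o _ _ => (o * (i + 1))%N
  | ACons i h _ _ _ Phi' => (h * (i + 1) + aparams Phi')%N
  end.

Definition maxdim i o (Phi : ann R i o) : nat := (\max_(l <- dims Phi) l)%N.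

Definition ann_pos i o (Phi : ann R i o) : bool := all (fun l => 0 < l)%N (dims Phi).

Fixpoint realization (a : R -> R) i o (Phi : ann R i o) : 'cV[R]_i -> 'cV[R]_o :=
  match Phi in ann _ i o return 'cV[R]_i -> 'cV[R]_o with
  | ALast _ _ W B => fun x => W *m x + B
  | ACons _ _ _ W B Phi' => fun x => realization a Phi' (map_mx a (W *m x + B))
  end.

Definition aff m n (W : 'M[R]_(m, n)) (B : 'cV[R]_m) : ann R n m := ALast W B.

Definition premerge h o (Phi1 : ann R h o) : forall i, 'M[R]_(h, i) -> 'cV[R]_h -> ann R i o :=
  match Phi1 in ann _ h o return forall i, 'M[R]_(h, i) -> 'cV[R]_h -> ann R i o with
  | ALast _ _ W1 B1 => fun i W B => ALast (W1 *m W) (W1 *m B + B1)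
  | ACons _ _ _ W1 B1 Phi1' => fun i W B => ACons (W1 *m W) (W1 *m B + B1) Phi1'
  end.

Fixpoint comp_aux i h (Phi2 : ann R i h) {struct Phi2} : forall o, ann R h o -> ann R i o :=
  match Phi2 in ann _ i h return forall o, ann R h o -> ann R i o with
  | ALast _ _ W B => fun o Phi1 => premerge Phi1 W B
  | ACons _ _ _ W B Phi2' => fun o Phi1 => ACons W B (comp_aux Phi2' Phi1)
  end.

(* composition Phi1 \bullet Phi2 (first Phi2, then Phi1) *)
Definition acomp i h o (Phi1 : ann R h o) (Phi2 : ann R i h) : ann R i o :=
  comp_aux Phi2 Phi1.

Definition ascale i o (lam : R) (Phi : ann R i o) : ann R i o :=
  acomp (aff (lam%:M : 'M[R]_o) 0) Phi.

(* parallelization of two ANNs of equal length: block-diagonal weights,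
   stacked biases (the value for unequal lengths is irrelevant). *)
Fixpoint par2 i1 o1 (Phi1 : ann R i1 o1) {struct Phi1} :
    forall i2 o2, ann R i2 o2 -> ann R (i1 + i2) (o1 + o2) :=
  match Phi1 in ann _ i1 o1 return forall i2 o2, ann R i2 o2 -> ann R (i1 + i2) (o1 + o2) with
  | ALast i1 o1 W1 B1 => fun i2 o2 Phi2 =>
      match Phi2 in ann _ i2 o2 return ann R (i1 + i2) (o1 + o2) with
      | ALast _ _ W2 B2 => ALast (block_mx W1 0 0 W2) (col_mx B1 B2)
      | ACons _ _ _ _ _ _ => ALast 0 0
      end
  | ACons i1 h1 o1 W1 B1 Phi1' => fun i2 o2 Phi2 =>
      match Phi2 in ann _ i2 o2 return ann R (i1 + i2) (o1 + o2) with
      | ALast _ _ _ _ => ALast 0 0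
      | ACons _ _ _ W2 B2 Phi2' =>
          ACons (block_mx W1 0 0 W2) (col_mx B1 B2) (par2 Phi1' Phi2')
      end
  end.

Fixpoint rep (X : Type) (s : seq X) (m : nat) : nat :=
  match s with
  | [::] => m
  | _ :: s' => (m + rep s' m)%N
  end.

(* P_n(Phi_0, ..., Phi_{n-1}) for the family Phi_0 :: s, all in ann R i o
   (block-diagonal diag(W_0,...,W_{n-1}) written as nested 2x2 blocks) *)
Fixpoint apar i o (Phi0 : ann R i o) (s : seq (ann R i o)) {struct s} :
    ann R (rep s i) (rep s o) :=
  match s return ann R (rep s i) (rep s o) with
  | [::] => Phi0
  | Phi1 :: s' => par2 Phi0 (apar Phi1 s')
  end.

(* S_{m,n} = (I_m ... I_m) and T_{m,n} = (I_m ... I_m)^T, n = size s + 1 *)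
Fixpoint Smx (X : Type) m (s : seq X) : 'M[R]_(m, rep s m) :=
  match s return 'M[R]_(m, rep s m) with
  | [::] => 1%:M
  | _ :: s' => row_mx 1%:M (Smx m s')
  end.
Fixpoint Tmx (X : Type) m (s : seq X) : 'M[R]_(rep s m, m) :=
  match s return 'M[R]_(rep s m, m) with
  | [::] => 1%:M
  | _ :: s' => col_mx 1%:M (Tmx m s')
  end.

(* sum (+)_{k} Phi_k of the family Phi0 :: s (all of equal length) *)
Definition asum i o (Phi0 : ann R i o) (s : seq (ann R i o)) : ann R i o :=
  acomp (aff (Smx o s) 0) (acomp (apar Phi0 s) (aff (Tmx i s) 0)).

(* (+)_{k=u}^{v} f k, for u <= v *)
Definition asumf i o (f : nat -> ann R i o) (u v : nat) : ann R i o :=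
  asum (f u) [seq f k | k <- iota u.+1 (v - u)].

Fixpoint apow o (Psi : ann R o o) (n : nat) : ann R o o :=
  match n with
  | 0 => aff (1%:M : 'M[R]_o) 0
  | n'.+1 => acomp Psi (apow Psi n')
  end.

Definition aext i o (L : nat) (Psi : ann R o o) (Phi : ann R i o) : ann R i o :=
  acomp (apow Psi (L - alen Phi)) Phi.

Definition abox i o (Psi : ann R o o) (Phi0 : ann R i o) (s : seq (ann R i o)) : ann R i o :=
  let L := (\max_(Phi <- Phi0 :: s) alen Phi)%N in
  asum (aext L Psi Phi0) [seq aext L Psi Phi | Phi <- s].

(* boxplus_{k=u,Psi}^{v} f k, for u <= v *)
Definition aboxf i o (Psi : ann R o o) (f : nat -> ann R i o) (u v : nat) : ann R i o :=
  abox Psi (f u) [seq f k | k <- iota u.+1 (v - u)].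

Definition real11 (a : R -> R) (Phi : ann R 1 1) (r : R) : R :=
  realization a Phi (const_mx r) 0 0.
Definition realn1 (a : R -> R) d (Phi : ann R d 1) (x : 'cV[R]_d) : R :=
  realization a Phi x 0 0.

End ANN.

From HB Require Import structures.
From mathcomp Require Import all_boot all_order all_algebra.
From mathcomp Require Import all_classical all_reals all_analysis.
From mathcomp Require Import zify ring.
Import Order.TTheory GRing.Theory Num.Theory numFieldNormedType.Exports.

Set Implicit Arguments.
Unset Strict Implicit.
Unset Printing Implicit Defensive.
Local Open Scope ring_scope.

(* Every network operation acts on the list of hidden-layer widths by an
   explicit list operation (concatenation for composition, componentwise sum
   for parallelisation, padding with the width [dd] of the identity network J
   for extension), and on realizations by the corresponding operation on
   functions; since J realises the identity, [abox] realises the plain sum.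
   Induction on n then shows that the widths of U^theta_{n,t} do not depend on
   theta and t, that its realization obeys the recursion of U^theta_n, and that
   each level adds at most H(F) layers.  For the width, the three blocks of the
   recursion contribute at most c M^n and twice sum_i M^(n-i) c (3M)^i, where
   c = max(dd, |||D(F)|||, |||D(G)|||), and these add up to exactly c (3M)^n.
   The parameter count is then bounded by L(Phi) |||D(Phi)||| (|||D(Phi)||| + 1). *)

Section WidthLists.
Implicit Types (l : seq nat) (ls : seq (seq nat)).

Fixpoint addseq l1 l2 : seq nat :=
  match l1, l2 with
  | x :: l1', y :: l2' => (x + y)%N :: addseq l1' l2'
  | _, _ => [::]
  end.

Fixpoint addseqs l0 ls : seq nat :=
  if ls is l1 :: ls' then addseq l0 (addseqs l1 ls') else l0.

Definition pad (h n : nat) l : seq nat := l ++ nseq (n - size l) h.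

Definition maxl l : nat := \max_(x <- l) x.

Lemma size_addseq l1 l2 : size (addseq l1 l2) = minn (size l1) (size l2).
Proof. by elim: l1 l2 => [|x l1 IH] [|y l2] //=; rewrite IH minnSS. Qed.

Lemma size_addseqs l0 ls :
  all (fun l => size l == size l0) ls -> size (addseqs l0 ls) = size l0.
Proof.
elim: ls l0 => [|l1 ls IH] l0 //= /andP[/eqP e1 sz].
rewrite size_addseq IH; first by rewrite e1 minnn.
by apply: sub_all sz => l /eqP ->; rewrite e1.
Qed.

Lemma size_addseqs_le l0 ls : (size (addseqs l0 ls) <= size l0)%N.
Proof. by elim: ls l0 => [|l1 ls IH] l0 //=; rewrite size_addseq geq_minl. Qed.

Lemma size_pad h n l : (size l <= n)%N -> size (pad h n l) = n.
Proof. by move=> ln; rewrite size_cat size_nseq; exact: subnKC. Qed.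

Lemma maxl_cat l1 l2 : maxl (l1 ++ l2) = maxn (maxl l1) (maxl l2).
Proof. by rewrite /maxl big_cat. Qed.

Lemma maxl_addseq l1 l2 : (maxl (addseq l1 l2) <= maxl l1 + maxl l2)%N.
Proof.
elim: l1 l2 => [|x l1 IH] [|y l2] //=; rewrite /maxl ?big_nil // !big_cons.
by have := IH l2; rewrite /maxl; lia.
Qed.

Lemma maxl_addseqs l0 ls : (maxl (addseqs l0 ls) <= \sum_(l <- l0 :: ls) maxl l)%N.
Proof.
elim: ls l0 => [|l1 ls IH] l0 /=; first by rewrite big_seq1.
by rewrite big_cons (leq_trans (maxl_addseq _ _)) // leq_add2l IH.
Qed.

Lemma maxl_pad h n l : (maxl (pad h n l) <= maxn (maxl l) h)%N.
Proof.
rewrite maxl_cat geq_max leq_maxl /=; apply/bigmax_leqP_seq => x /nseqP[-> _] _.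
exact: leq_maxr.
Qed.

End WidthLists.

Lemma bigmaxS_cons (I : Type) (x : I) (s : seq I) (f : I -> nat) :
  (\max_(y <- x :: s) (f y).+1 = (\max_(y <- x :: s) f y).+1)%N.
Proof.
elim: s x => [|y s IH] x; first by rewrite !big_seq1.
by rewrite big_cons IH [in RHS]big_cons maxnSS.
Qed.

Lemma all_leq_bigmax (I : Type) (f : I -> nat) (s : seq I) :
  all (fun x => f x <= \max_(y <- s) f y)%N s.
Proof.
elim: s => [|x s IH] //=; rewrite big_cons leq_maxl /=.
by apply: sub_all IH => y /= fy; rewrite (leq_trans fy) ?leq_maxr.
Qed.

Lemma cats2_neq0 (X : eqType) (s : seq X) (x y : X) : s ++ [:: x; y] != [::].
Proof. by case: s. Qed.

(* The hidden widths of [abox J P0 s], computed from those of the summands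
   when J has the single hidden width h (see [hdims_abox]). *)
Definition boxhdims (h : nat) (l0 : seq nat) (ls : seq (seq nat)) : seq nat :=
  let L := (\max_(l <- l0 :: ls) size l)%N in addseqs (pad h L l0) (map (pad h L) ls).

Section HiddenWidths.
Variable R : pzRingType.

Fixpoint hdims i o (P : ann R i o) : seq nat :=
  match P with
  | ALast _ _ _ _ => [::]
  | ACons _ h _ _ _ P' => h :: hdims P'
  end.

Lemma dimsE i o (P : ann R i o) : dims P = i :: rcons (hdims P) o.
Proof. by elim: P => //= i' h o' W B P ->. Qed.

Lemma alenE i o (P : ann R i o) : alen P = (size (hdims P)).+1.
Proof. by elim: P => //= i' h o' W B P ->. Qed.

Lemma hdims_acomp i h o (P1 : ann R h o) (P2 : ann R i h) :
  hdims (acomp P1 P2) = hdims P2 ++ hdims P1.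
Proof.
rewrite /acomp; elim: P2 o P1 => [i' h' W B|i' h' o' W B P2 IH] o P1 /=.
  by case: P1 W B.
by rewrite IH.
Qed.

Lemma alen_acomp i h o (P1 : ann R h o) (P2 : ann R i h) :
  alen (acomp P1 P2) = (alen P1 + alen P2).-1.
Proof. by rewrite !alenE hdims_acomp size_cat addnS addSn addnC. Qed.

Lemma hdims_ascale i o lam (P : ann R i o) : hdims (ascale lam P) = hdims P.
Proof. by rewrite /ascale hdims_acomp cats0. Qed.

Lemma alen_ascale i o lam (P : ann R i o) : alen (ascale lam P) = alen P.
Proof. by rewrite !alenE hdims_ascale. Qed.

Lemma hdims_par2 i1 o1 (P1 : ann R i1 o1) i2 o2 (P2 : ann R i2 o2) :
  hdims (par2 P1 P2) = addseq (hdims P1) (hdims P2).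
Proof.
elim: P1 i2 o2 P2 => [i o W B|i h o W B P1 IH] i2 o2 [i' o' W' B'|i' h' o' W' B' P2] //=.
by rewrite IH.
Qed.

Lemma hdims_apar i o (P0 : ann R i o) s :
  hdims (apar P0 s) = addseqs (hdims P0) (map (@hdims i o) s).
Proof. by elim: s P0 => [|P1 s IH] P0 //=; rewrite hdims_par2 IH. Qed.

Lemma hdims_asum i o (P0 : ann R i o) s :
  hdims (asum P0 s) = addseqs (hdims P0) (map (@hdims i o) s).
Proof. by rewrite /asum !hdims_acomp /= cats0 hdims_apar. Qed.

Lemma hdims_asumf i o (f : nat -> ann R i o) u v :
  hdims (asumf f u v) = addseqs (hdims (f u)) [seq hdims (f k) | k <- iota u.+1 (v - u)].
Proof. by rewrite /asumf hdims_asum -map_comp. Qed.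

Lemma alen_asumf_le i o (f : nat -> ann R i o) u v : (alen (asumf f u v) <= alen (f u))%N.
Proof. by rewrite !alenE hdims_asumf ltnS size_addseqs_le. Qed.

Lemma eq_hdims_asumf i o (f g : nat -> ann R i o) u v : (u <= v)%N ->
  (forall k, (u <= k <= v)%N -> hdims (f k) = hdims (g k)) ->
  hdims (asumf f u v) = hdims (asumf g u v).
Proof.
move=> uv fg; rewrite !hdims_asumf fg ?leqnn ?uv //; congr addseqs.
by apply/eq_in_map => k; rewrite mem_iota => /andP[uk kv]; apply: fg; lia.
Qed.

Lemma maxl_hdims_asumf i o (f : nat -> ann R i o) u v : (u <= v)%N ->
  (maxl (hdims (asumf f u v)) <= \sum_(u <= k < v.+1) maxl (hdims (f k)))%N.
Proof.
move=> uv; rewrite hdims_asumf (leq_trans (maxl_addseqs _ _)) //.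
by rewrite big_cons big_map big_ltn.
Qed.

Section IdentityExtension.
Variables (o h : nat) (J : ann R o o).
Hypothesis hdimsJ : hdims J = [:: h].

Lemma hdims_aext i L (P : ann R i o) :
  hdims (aext L J P) = hdims P ++ nseq (L - alen P) h.
Proof.
rewrite /aext hdims_acomp; congr (_ ++ _).
elim: (L - alen P)%N => //= k IH.
by rewrite hdims_acomp IH hdimsJ -[[:: h]]/(nseq 1 h) -nseqD addn1.
Qed.

Lemma hdims_abox i (P0 : ann R i o) s :
  hdims (abox J P0 s) = boxhdims h (hdims P0) (map (@hdims i o) s).
Proof.
have maxS : (\max_(P <- P0 :: s) alen P = (\max_(l <- map (@hdims i o) (P0 :: s)) size l).+1)%N.
  by rewrite big_map -bigmaxS_cons; apply: eq_bigr => P _; rewrite alenE.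
rewrite /abox hdims_asum /boxhdims maxS hdims_aext alenE subSS -!map_comp; congr addseqs.
by apply: eq_map => P /=; rewrite hdims_aext alenE subSS.
Qed.

Lemma eq_hdims_abox i (P0 Q0 : ann R i o) s s' :
  hdims P0 = hdims Q0 -> map (@hdims i o) s = map (@hdims i o) s' ->
  hdims (abox J P0 s) = hdims (abox J Q0 s').
Proof. by move=> e0 es; rewrite !hdims_abox e0 es. Qed.

Lemma alen_abox i (P0 : ann R i o) s : alen (abox J P0 s) = (\max_(P <- P0 :: s) alen P)%N.
Proof.
under eq_bigr do rewrite alenE.
rewrite bigmaxS_cons alenE hdims_abox /boxhdims -(big_map (@hdims i o) xpredT size).
set L := (\max_(l <- _) size l)%N.
have le_L l : l \in map (@hdims i o) (P0 :: s) -> (size l <= L)%N.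
  by move=> ls; apply: leq_bigmax_seq.
rewrite size_addseqs size_pad ?le_L ?mem_head //.
apply/allP => _ /mapP[l ls ->]; rewrite !size_pad ?le_L ?mem_head //.
by rewrite inE ls orbT.
Qed.

Lemma maxl_hdims_abox i (P0 : ann R i o) s :
  (maxl (hdims (abox J P0 s)) <= \sum_(P <- P0 :: s) maxn (maxl (hdims P)) h)%N.
Proof.
rewrite hdims_abox (leq_trans (maxl_addseqs _ _)) // !big_cons !big_map leq_add ?maxl_pad //.
by apply: leq_sum => P _; exact: maxl_pad.
Qed.

Lemma hdims_aboxf i (f : nat -> ann R i o) u v :
  hdims (aboxf J f u v) = boxhdims h (hdims (f u)) [seq hdims (f k) | k <- iota u.+1 (v - u)].
Proof. by rewrite /aboxf hdims_abox -map_comp. Qed.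

Lemma eq_hdims_aboxf i (f g : nat -> ann R i o) u v : (u <= v)%N ->
  (forall k, (u <= k <= v)%N -> hdims (f k) = hdims (g k)) ->
  hdims (aboxf J f u v) = hdims (aboxf J g u v).
Proof.
move=> uv fg; rewrite !hdims_aboxf fg ?leqnn ?uv //; congr boxhdims.
by apply/eq_in_map => k; rewrite mem_iota => /andP[uk kv]; apply: fg; lia.
Qed.

Lemma alen_aboxf i (f : nat -> ann R i o) u v : (u <= v)%N ->
  alen (aboxf J f u v) = (\max_(u <= k < v.+1) alen (f k))%N.
Proof. by move=> uv; rewrite /aboxf alen_abox big_cons big_map big_ltn. Qed.

Lemma maxl_hdims_aboxf i (f : nat -> ann R i o) u v : (u <= v)%N ->
  (maxl (hdims (aboxf J f u v)) <= \sum_(u <= k < v.+1) maxn (maxl (hdims (f k))) h)%N.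
Proof.
move=> uv; rewrite (leq_trans (maxl_hdims_abox _ _)) //.
by rewrite big_cons big_map big_ltn.
Qed.

End IdentityExtension.
End HiddenWidths.

(* Stated over an abstract nmodType: checking [v.+1 - u.+1 = v - u] by conversion
   directly on sums of matrix-valued realizations is prohibitively slow. *)
Lemma big_ltn_iota (V : nmodType) (g : nat -> V) u v : (u <= v)%N ->
  g u + \sum_(k <- iota u.+1 (v - u)) g k = \sum_(u <= k < v.+1) g k.
Proof. by move=> uv; rewrite big_ltn. Qed.

Section Realization.
Variables (R : pzRingType) (a : R -> R).

Lemma realization_acomp i h o (P1 : ann R h o) (P2 : ann R i h) x :
  realization a (acomp P1 P2) x = realization a P1 (realization a P2 x).
Proof.
rewrite /acomp; elim: P2 o P1 x => [i' h' W B|i' h' o' W B P2 IH] o P1 x /=.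
  by case: P1 W B => [? ? W1 B1|? ? ? W1 B1 ?] W B /=; rewrite mulmxDr mulmxA addrA.
by rewrite IH.
Qed.

Lemma realization_ascale i o lam (P : ann R i o) x :
  realization a (ascale lam P) x = lam *: realization a P x.
Proof. by rewrite /ascale realization_acomp /= mul_scalar_mx addr0. Qed.

Lemma realization_par2 i1 o1 (P1 : ann R i1 o1) i2 o2 (P2 : ann R i2 o2) x1 x2 :
  alen P1 = alen P2 ->
  realization a (par2 P1 P2) (col_mx x1 x2) =
    col_mx (realization a P1 x1) (realization a P2 x2).
Proof.
elim: P1 i2 o2 P2 x1 x2 => [i o W B|i h o W B P1 IH] i2 o2
    [i' o' W' B'|i' h' o' W' B' P2] x1 x2 //=; rewrite ?alenE //.
- by move=> _; rewrite mul_block_col !mul0mx addr0 add0r add_col_mx.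
move=> [] len; rewrite mul_block_col !mul0mx addr0 add0r add_col_mx map_col_mx.
by rewrite IH ?alenE ?len.
Qed.

Lemma realization_asum i o (P0 : ann R i o) s x :
  all (fun P => alen P == alen P0) s ->
  realization a (asum P0 s) x = realization a P0 x + \sum_(P <- s) realization a P x.
Proof.
rewrite /asum !realization_acomp /= !addr0.
elim: s P0 => [|P1 s IH] P0 /=; first by rewrite !mul1mx big_nil addr0.
case/andP => /eqP e1 len_s.
have len_s1 : all (fun P => alen P == alen P1) s.
  by apply: sub_all len_s => P /eqP ->; rewrite e1.
have len_par : alen (apar P1 s) = alen P1.
  rewrite !alenE hdims_apar size_addseqs // all_map.
  by apply: sub_all len_s1 => P; rewrite !alenE eqSS.
rewrite mul_col_mx mul1mx realization_par2 ?len_par ?e1 //.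
by rewrite mul_row_col mul1mx IH // big_cons.
Qed.

Lemma realization_apow o (J : ann R o o) k y : (forall z, realization a J z = z) ->
  realization a (apow J k) y = y.
Proof.
move=> Jid; elim: k y => [|k IH] y /=; first by rewrite mul1mx addr0.
by rewrite realization_acomp Jid IH.
Qed.

Section IdentityExtension.
Variables (o h : nat) (J : ann R o o).
Hypotheses (hdimsJ : hdims J = [:: h]) (Jid : forall z, realization a J z = z).

Lemma realization_abox i (P0 : ann R i o) s x :
  realization a (abox J P0 s) x = realization a P0 x + \sum_(P <- s) realization a P x.
Proof.
rewrite /abox; set L := (\max_(P <- P0 :: s) alen P)%N.
have /andP[len0 lens] := all_leq_bigmax (@alen R i o) (P0 :: s).
have alen_ext (P : ann R i o) : (alen P <= L)%N -> alen (aext L J P) = L.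
  move=> PL; rewrite alenE (hdims_aext hdimsJ) size_cat size_nseq.
  by rewrite alenE in PL *; rewrite -addnS subnSK // subnKC // ltnW.
rewrite realization_asum; last first.
  rewrite all_map (alen_ext P0 len0); apply: sub_all lens => P PL /=.
  by rewrite alen_ext.
rewrite /aext realization_acomp realization_apow // big_map; congr (_ + _).
by apply: eq_bigr => P _; rewrite realization_acomp realization_apow.
Qed.

Lemma realization_aboxf i (f : nat -> ann R i o) u v x : (u <= v)%N ->
  realization a (aboxf J f u v) x = \sum_(u <= k < v.+1) realization a (f k) x.
Proof.
move=> uv; rewrite /aboxf realization_abox big_map.
exact: (big_ltn_iota (fun k => realization a (f k) x)).
Qed.

End IdentityExtension.

Lemma realization_asumf i o (f : nat -> ann R i o) u v x :
  (forall k, alen (f k) = alen (f u)) -> (u <= v)%N ->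
  realization a (asumf f u v) x = \sum_(u <= k < v.+1) realization a (f k) x.
Proof.
move=> len_f uv; rewrite /asumf realization_asum ?big_map.
  exact: (big_ltn_iota (fun k => realization a (f k) x)).
by rewrite all_map; apply/allP => k _ /=; rewrite len_f.
Qed.

End Realization.

Section Continuity.
Variable R : realType.

Lemma continuous_mx (X : topologicalType) m n (f : X -> 'M[R]_(m, n)) :
  (forall i j, continuous (fun x => f x i j)) -> continuous f.
Proof.
move=> fc x A [P Pnb sPA].
have : \forall y \near x, forall ij : 'I_m * 'I_n, P ij.1 ij.2 (f y ij.1 ij.2).
  by apply: filter_forall => -[i j] /=; exact: (fc i j x _ (Pnb i j)).
by apply: filterS => y fy; apply: sPA => i j; exact: (fy (i, j)).
Qed.

Lemma continuous_sum (X : topologicalType) (I : Type) (s : seq I) (g : I -> X -> R) :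
  (forall k, continuous (g k)) -> continuous (fun x => \sum_(k <- s) g k x).
Proof.
move=> gc; elim: s => [|k s IH].
  by under eq_fun do rewrite big_nil; exact: cst_continuous.
by under eq_fun do rewrite big_cons; move=> x; apply: continuousD; [exact: gc|exact: IH].
Qed.

Lemma continuous_affine m n (W : 'M[R]_(m, n)) B :
  continuous (fun x : 'M[R]_(n, 1) => W *m x + B).
Proof.
apply: continuous_mx => i j; under eq_fun do rewrite !mxE.
move=> x; apply: continuousD; last exact: cst_continuous.
apply: continuous_sum => k y; apply: continuousM; first exact: cst_continuous.
exact: coord_continuous.
Qed.

Lemma continuous_map_mx (a : R -> R) m n :
  continuous a -> continuous (fun x : 'M[R]_(m, n) => map_mx a x).
Proof.
move=> ac; apply: continuous_mx => i j; under eq_fun do rewrite mxE.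
move=> x; apply: (@continuous_comp _ _ _ (fun A : 'M[R]_(m, n) => A i j) a).
  exact: coord_continuous.
exact: ac.
Qed.

Lemma continuous_realization (a : R -> R) i o (P : ann R i o) :
  continuous a -> continuous (realization a P).
Proof.
move=> ac; elim: P => [i' o' W B|i' h o' W B P IH] /=; first exact: continuous_affine.
move=> x; apply: (@continuous_comp _ _ _ (fun y => map_mx a (W *m y + B))); last exact: IH.
apply: (@continuous_comp _ _ _ (fun y => W *m y + B) (map_mx a)).
  exact: continuous_affine.
exact: continuous_map_mx.
Qed.

End Continuity.

Section ParameterCount.
Variable R : pzRingType.

Lemma maxdimE i o (P : ann R i o) : maxdim P = maxn i (maxn (maxl (hdims P)) o).
Proof. by rewrite /maxdim dimsE big_cons -cats1 big_cat big_seq1. Qed.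

Lemma maxdim_ACons i h o W B (P : ann R h o) :
  maxdim (ACons (i := i) W B P) = maxn i (maxdim P).
Proof. by rewrite /maxdim /= big_cons. Qed.

Lemma leq_in_maxdim i o (P : ann R i o) : (i <= maxdim P)%N.
Proof. by rewrite maxdimE leq_maxl. Qed.

Lemma aparams_le i o (P : ann R i o) :
  (aparams P <= alen P * (maxdim P * (maxdim P).+1))%N.
Proof.
elim: P => [i' o' W B|i' h o' W B P IH] /=.
  by rewrite maxdimE mul1n addn1 leq_mul ?ltnS; lia.
have hP := leq_in_maxdim P; rewrite maxdim_ACons mulSn addn1.
apply: leq_add.
  by apply: leq_mul; [exact: leq_trans hP (leq_maxr _ _)|rewrite ltnS leq_maxl].
apply: leq_trans IH _; apply: leq_mul => //.
by apply: leq_mul; [exact: leq_maxr|rewrite ltnS leq_maxr].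
Qed.

End ParameterCount.

Lemma level_width_sum n c M :
  (c * M ^ n + 2 * \sum_(0 <= j < n) M ^ (n - j) * (c * (3 * M) ^ j) = c * (3 * M) ^ n)%N.
Proof.
have -> : (\sum_(0 <= j < n) M ^ (n - j) * (c * (3 * M) ^ j) =
           c * M ^ n * \sum_(j < n) 3 ^ j)%N.
  rewrite big_distrr big_mkord; apply: eq_bigr => j _.
  have := ltn_ord j; move: (nat_of_ord j) => k kn.
  by rewrite expnMn -{2}(subnK (ltnW kn)) expnD /=; lia.
have geom : (2 * \sum_(j < n) 3 ^ j = (3 ^ n).-1)%N by rewrite predn_exp.
by rewrite mulnCA geom -mulnS prednK ?expn_gt0 // expnMn mulnAC mulnA.
Qed.

Section LevelSums.
Variables (R : pzRingType) (i o h c M : nat) (J : ann R o o).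
Hypotheses (hdimsJ : hdims J = [:: h]) (h_le_c : (h <= c)%N) (M_gt0 : (0 < M)%N).

Lemma maxl_hdims_level_sum n (coef : nat -> R) (f : nat -> nat -> ann R i o) : (0 < n)%N ->
  (forall j k, (j < n)%N -> (maxl (hdims (f j k)) <= c * (3 * M) ^ j)%N) ->
  (maxn (maxl (hdims (aboxf J (fun j => ascale (coef j) (aboxf J (f j) 1 (M ^ (n - j)))) 0 n.-1)))
     h <= \sum_(0 <= j < n) M ^ (n - j) * (c * (3 * M) ^ j))%N.
Proof.
move=> n_gt0 f_le.
have c_le j : (h <= c * (3 * M) ^ j)%N.
  by rewrite (leq_trans h_le_c) // leq_pmulr // expn_gt0 muln_gt0 M_gt0.
have term_ge j : (c * (3 * M) ^ j <= M ^ (n - j) * (c * (3 * M) ^ j))%N.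
  by rewrite leq_pmull // expn_gt0 M_gt0.
rewrite geq_max; apply/andP; split; last first.
  by rewrite big_ltn // (leq_trans (leq_trans (c_le 0) (term_ge 0))) ?leq_addr.
rewrite (leq_trans (maxl_hdims_aboxf hdimsJ _ (leq0n _))) // prednK //.
rewrite big_nat_cond [X in (_ <= X)%N]big_nat_cond; apply: leq_sum => j /andP[/andP[_ jn] _].
rewrite hdims_ascale geq_max (leq_trans (c_le j) (term_ge j)) andbT.
rewrite (leq_trans (maxl_hdims_aboxf hdimsJ _ _)) ?expn_gt0 ?M_gt0 //.
have -> : (M ^ (n - j) * (c * (3 * M) ^ j) =
           \sum_(1 <= k < (M ^ (n - j)).+1) c * (3 * M) ^ j)%N.
  by rewrite sum_nat_const_nat subn1.
by apply: leq_sum => k _; rewrite geq_max c_le f_le.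
Qed.

End LevelSums.

Lemma const_mx11 (R : Type) (v : 'cV[R]_1) : const_mx (v 0 0) = v.
Proof. by apply/matrixP => i j; rewrite !ord1 mxE. Qed.

Lemma params_le_of_dims_le p L Lb w b x n : (0 < w)%N -> (w <= b * x ^ n)%N -> (L <= Lb)%N ->
  (p <= L * (w * w.+1))%N -> (p <= 2 * Lb * b ^ 2 * x ^ (2 * n))%N.
Proof.
move=> w_gt0 wb LLb pL.
have -> : (2 * Lb * b ^ 2 * x ^ (2 * n) = Lb * (2 * ((b * x ^ n) * (b * x ^ n))))%N.
  by rewrite (mulnC 2 n) expnM; ring.
apply: (leq_trans pL); apply: leq_mul => //.
have ww : (w * w.+1 <= 2 * (w * w))%N.
  by rewrite mulnCA leq_mul2l -addn1 mul2n -addnn leq_add2l w_gt0 orbT.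
by rewrite (leq_trans ww) // leq_mul2l leq_mul.
Qed.

Section MLPNetworks.
Variables (R : realType) (d M dd : nat) (T : R) (a : R -> R).
Variables (J F : ann R 1 1) (G : ann R d 1).
Variables (cU : seq int -> R -> R) (W : seq int -> R -> 'cV[R]_d).
Variables (U : seq int -> nat -> R -> 'cV[R]_d -> R) (bU : seq int -> nat -> R -> ann R d 1).
Hypotheses (M_gt0 : (0 < M)%N) (dd_gt0 : (0 < dd)%N).
Hypothesis dimsJ : dims J = [:: 1%N; dd; 1%N].
Hypothesis realization_J : forall x, realization a J x = x.
Hypothesis cU_range : forall th t, th != [::] -> 0 <= t <= T -> 0 <= cU th t <= T.
Hypothesis U_rec : forall th n t x, th != [::] -> 0 <= t <= T ->
     U th n t x =
       (0 < n)%N%:R / (M ^ n)%:R *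
         \sum_(1 <= k < (M ^ n).+1) realn1 a G (x + W (th ++ [:: 0; - (k%:Z)]) (T - t))
       + \sum_(0 <= i < n)
           ((T - t) / (M ^ (n - i))%:R *
            \sum_(1 <= k < (M ^ (n - i)).+1)
              (real11 a F (U (th ++ [:: i%:Z; k%:Z]) i (cU (th ++ [:: i%:Z; k%:Z]) t)
                             (x + W (th ++ [:: i%:Z; k%:Z]) (cU (th ++ [:: i%:Z; k%:Z]) t - t)))
               - (0 < i)%N%:R *
                 real11 a F (U (th ++ [:: - (i%:Z); k%:Z]) (maxn i.-1 0)
                             (cU (th ++ [:: i%:Z; k%:Z]) t)
                             (x + W (th ++ [:: i%:Z; k%:Z]) (cU (th ++ [:: i%:Z; k%:Z]) t - t))))).
Hypothesis bU0 : forall th t, th != [::] -> 0 <= t <= T -> bU th 0%N t = aff (0 : 'M[R]_(1, d)) 0.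
Hypothesis bU_rec : forall th n t, th != [::] -> 0 <= t <= T -> (0 < n)%N ->
     bU th n t =
       abox J
         (asumf (fun k => ascale (1 / (M ^ n)%:R)
                   (acomp G (aff (1%:M : 'M[R]_d) (W (th ++ [:: 0; - (k%:Z)]) (T - t)))))
                1 (M ^ n))
         [:: aboxf J (fun i =>
                ascale ((T - t) / (M ^ (n - i))%:R)
                  (aboxf J (fun k =>
                     acomp (acomp F (bU (th ++ [:: i%:Z; k%:Z]) i (cU (th ++ [:: i%:Z; k%:Z]) t)))
                           (aff (1%:M : 'M[R]_d)
                                (W (th ++ [:: i%:Z; k%:Z]) (cU (th ++ [:: i%:Z; k%:Z]) t - t))))
                     1 (M ^ (n - i))))
              0 n.-1;
             aboxf J (fun i =>
                ascale ((t - T) * (0 < i)%N%:R / (M ^ (n - i))%:R)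
                  (aboxf J (fun k =>
                     acomp (acomp F (bU (th ++ [:: - (i%:Z); k%:Z]) (maxn i.-1 0)
                                        (cU (th ++ [:: i%:Z; k%:Z]) t)))
                           (aff (1%:M : 'M[R]_d)
                                (W (th ++ [:: i%:Z; k%:Z]) (cU (th ++ [:: i%:Z; k%:Z]) t - t))))
                     1 (M ^ (n - i))))
              0 n.-1].

Local Notation c := (maxn dd (maxn (maxdim F) (maxdim G))).

Lemma hdims_J : hdims J = [:: dd].
Proof. by move: dimsJ; rewrite dimsE; case: (hdims J) => [|? [|? []]] // [->]. Qed.

Lemma cU_cat2 th (i k : int) t : 0 <= t <= T -> 0 <= cU (th ++ [:: i; k]) t <= T.
Proof. exact/cU_range/cats2_neq0. Qed.

Let expM_gt0 (k : nat) : (0 < M ^ k)%N.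
Proof. by rewrite expn_gt0 M_gt0. Qed.

Lemma hdims_bU_eq n th1 th2 t1 t2 : th1 != [::] -> th2 != [::] ->
  0 <= t1 <= T -> 0 <= t2 <= T -> hdims (bU th1 n t1) = hdims (bU th2 n t2).
Proof.
elim/ltn_ind: n th1 th2 t1 t2 => -[|n] IH th1 th2 t1 t2 nth1 nth2 ht1 ht2.
  by rewrite !bU0.
rewrite !bU_rec //; apply: (eq_hdims_abox hdims_J).
  apply: (eq_hdims_asumf (expM_gt0 _)) => k _.
  by rewrite !hdims_ascale !hdims_acomp.
congr [:: _; _]; apply: (eq_hdims_aboxf hdims_J (leq0n _)) => i /andP[_ hi];
  rewrite !hdims_ascale; apply: (eq_hdims_aboxf hdims_J (expM_gt0 _)) => k _;
  rewrite !hdims_acomp /=; congr (_ ++ _);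
  apply: IH; rewrite ?cats2_neq0 ?cU_cat2 //; lia.
Qed.

Lemma alen_child_le j n (B : ann R d 1) (w : 'cV[R]_d) : (j <= n)%N ->
  (alen B <= maxn dd (alen G) + j * ahidden F)%N ->
  (alen (acomp (acomp F B) (aff 1%:M w)) <= maxn dd (alen G) + n.+1 * ahidden F)%N.
Proof.
move=> jn; rewrite !alen_acomp /ahidden [alen F]alenE /= addn1 /=.
by have := leq_mul jn (leqnn (size (hdims F))); lia.
Qed.

Lemma alen_bU_le n th t : th != [::] -> 0 <= t <= T ->
  (alen (bU th n t) <= maxn dd (alen G) + n * ahidden F)%N.
Proof.
elim/ltn_ind: n th t => -[|n] IH th t nth ht; first by rewrite bU0 //=; lia.
rewrite bU_rec // (alen_abox hdims_J) !big_cons big_nil !geq_max leq0n !andbT.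
apply/and3P; split.
- rewrite (leq_trans (alen_asumf_le _ _ _)) // alen_ascale alen_acomp /= addn1 /=; lia.
- rewrite (alen_aboxf hdims_J) //; apply/bigmax_leqP_seq => i.
  rewrite mem_index_iota => /andP[_ hi] _.
  rewrite alen_ascale (alen_aboxf hdims_J) //; apply/bigmax_leqP_seq => k _ _.
  by apply: alen_child_le (IH _ hi _ _ (cats2_neq0 _ _ _) (cU_cat2 _ _ _ ht)); lia.
- rewrite (alen_aboxf hdims_J) //; apply/bigmax_leqP_seq => i.
  rewrite mem_index_iota => /andP[_ hi] _.
  rewrite alen_ascale (alen_aboxf hdims_J) //; apply/bigmax_leqP_seq => k _ _.
  have hj : (maxn i.-1 0 < n.+1)%N by lia.
  by apply: alen_child_le (IH _ hj _ _ (cats2_neq0 _ _ _) (cU_cat2 _ _ _ ht)); lia.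
Qed.

Let width_ge (m : nat) : (c <= c * (3 * M) ^ m)%N.
Proof. by rewrite leq_pmulr // expn_gt0 muln_gt0 M_gt0. Qed.

Lemma maxl_hdims_bU_le n th t : th != [::] -> 0 <= t <= T ->
  (maxl (hdims (bU th n t)) <= c * (3 * M) ^ n)%N.
Proof.
have hF_le m : (maxl (hdims F) <= c * (3 * M) ^ m)%N.
  by apply: leq_trans (width_ge m); rewrite maxdimE; lia.
elim/ltn_ind: n th t => -[|n] IH th t nth ht; first by rewrite bU0 // /maxl big_nil.
have child lev sgn (i k : nat) : (lev <= i < n.+1)%N ->
    (maxl (hdims (acomp (acomp F (bU (th ++ [:: sgn; k%:Z]) lev (cU (th ++ [:: i%:Z; k%:Z]) t)))
        (aff (1%:M : 'M[R]_d) (W (th ++ [:: i%:Z; k%:Z]) (cU (th ++ [:: i%:Z; k%:Z]) t - t)))))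
      <= c * (3 * M) ^ i)%N.
  move=> /andP[lev_i i_n]; rewrite !hdims_acomp /= maxl_cat geq_max hF_le andbT.
  apply: leq_trans (IH _ (leq_ltn_trans lev_i i_n) _ _ (cats2_neq0 _ _ _) (cU_cat2 _ _ _ ht)) _.
  by apply: leq_mul => //; apply: leq_pexp2l; rewrite ?muln_gt0 ?M_gt0.
rewrite bU_rec // (leq_trans (maxl_hdims_abox hdims_J _ _)) //.
rewrite !big_cons big_nil addn0 -level_width_sum mul2n -addnn.
apply: leq_add; [|apply: leq_add].
- have c_le : (c <= c * M ^ n.+1)%N by rewrite leq_pmulr ?expM_gt0.
  rewrite geq_max (leq_trans (leq_maxl _ _) c_le) andbT.
  rewrite (leq_trans (maxl_hdims_asumf _ (expM_gt0 _))) //.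
  have -> : (c * M ^ n.+1 = \sum_(1 <= k < (M ^ n.+1).+1) c)%N.
    by rewrite sum_nat_const_nat subn1 mulnC.
  apply: leq_sum => k _; rewrite hdims_ascale hdims_acomp /=.
  by have := maxdimE G; lia.
- apply: (maxl_hdims_level_sum hdims_J (leq_maxl _ _) M_gt0) => // i k hi.
  by apply: child; rewrite leqnn hi.
- apply: (maxl_hdims_level_sum hdims_J (leq_maxl _ _) M_gt0) => // i k hi.
  by apply: child; rewrite hi andbT; lia.
Qed.

Lemma maxdim_bU_le n th t : th != [::] -> 0 <= t <= T ->
  (maxdim (bU th n t) <= c * (3 * M) ^ n)%N.
Proof.
move=> nth ht; have c_le := width_ge n.
have d_le_c : (d <= c)%N by have := maxdimE G; lia.
rewrite maxdimE !geq_max maxl_hdims_bU_le // (leq_trans d_le_c c_le) /=.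
by apply: leq_trans c_le; lia.
Qed.

Lemma realization_bU n th t x : th != [::] -> 0 <= t <= T ->
  U th n t x = realn1 a (bU th n t) x.
Proof.
elim/ltn_ind: n th t x => -[|n] IH th t x nth ht.
  by rewrite U_rec // bU0 // /realn1 /= !mul0r big_geq // add0r mul0mx add0r mxE.
rewrite /realn1 bU_rec // (realization_abox hdims_J realization_J).
rewrite !big_cons big_nil addr0 !mxE U_rec //.
rewrite realization_asumf //; last first.
  by move=> k; rewrite !alenE !hdims_ascale !hdims_acomp.
rewrite !(realization_aboxf hdims_J realization_J) // summxE; congr (_ + _).
  rewrite mulr_sumr; apply: eq_bigr => k _.
  by rewrite realization_ascale mxE realization_acomp /= mul1mx.
rewrite !summxE -big_split; apply: eq_big_nat => i /andP[_ hi].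
rewrite !realization_ascale !mxE !(realization_aboxf hdims_J realization_J) // !summxE.
rewrite !mulr_sumr -big_split; apply: eq_bigr => k _.
have hj : (maxn i.-1 0 < n.+1)%N by lia.
rewrite !realization_acomp /= !mul1mx.
rewrite (IH i hi _ _ _ (cats2_neq0 _ _ _) (cU_cat2 _ _ _ ht)).
rewrite (IH _ hj _ _ _ (cats2_neq0 _ _ _) (cU_cat2 _ _ _ ht)).
by rewrite /real11 /realn1 !const_mx11; ring.
Qed.

Lemma aparams_bU_le n th t : th != [::] -> 0 <= t <= T ->
  (aparams (bU th n t) <= 2 * (maxn dd (alen G) + n * ahidden F) * c ^ 2 * (3 * M) ^ (2 * n))%N.
Proof.
move=> nth ht; apply: params_le_of_dims_le (aparams_le _).
- by rewrite maxdimE; lia.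
- exact: maxdim_bU_le.
- exact: alen_bU_le.
Qed.

End MLPNetworks.

Unset Implicit Arguments.
Set Strict Implicit.

Theorem mainTheorem4 (R : realType) (d M dd : nat) (T : R) (a : R -> R)
  (J : ann R 1 1) (F : ann R 1 1) (G : ann R d 1)
  (cU : seq int -> R -> R) (W : seq int -> R -> 'cV[R]_d)
  (U : seq int -> nat -> R -> 'cV[R]_d -> R)
  (bU : seq int -> nat -> R -> ann R d 1) :
  (0 < d)%N -> (0 < M)%N -> (0 < dd)%N -> 0 < T -> continuous a ->
  ann_pos J -> ann_pos F -> ann_pos G ->
  dims J = [:: 1%N; dd; 1%N] ->
  (forall x, realization a J x = x) ->
  (forall th t, th != [::] -> 0 <= t <= T -> 0 <= cU th t <= T) ->
  (forall th n t x, th != [::] -> 0 <= t <= T ->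
     U th n t x =
       (0 < n)%N%:R / (M ^ n)%:R *
         \sum_(1 <= k < (M ^ n).+1) realn1 a G (x + W (th ++ [:: 0; - (k%:Z)]) (T - t))
       + \sum_(0 <= i < n)
           ((T - t) / (M ^ (n - i))%:R *
            \sum_(1 <= k < (M ^ (n - i)).+1)
              (real11 a F (U (th ++ [:: i%:Z; k%:Z]) i (cU (th ++ [:: i%:Z; k%:Z]) t)
                             (x + W (th ++ [:: i%:Z; k%:Z]) (cU (th ++ [:: i%:Z; k%:Z]) t - t)))
               - (0 < i)%N%:R *
                 real11 a F (U (th ++ [:: - (i%:Z); k%:Z]) (maxn i.-1 0)
                             (cU (th ++ [:: i%:Z; k%:Z]) t)
                             (x + W (th ++ [:: i%:Z; k%:Z]) (cU (th ++ [:: i%:Z; k%:Z]) t - t)))))) ->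
  (forall th t, th != [::] -> 0 <= t <= T -> bU th 0%N t = aff (0 : 'M[R]_(1, d)) 0) ->
  (forall th n t, th != [::] -> 0 <= t <= T -> (0 < n)%N ->
     bU th n t =
       abox J
         (asumf (fun k => ascale (1 / (M ^ n)%:R)
                   (acomp G (aff (1%:M : 'M[R]_d) (W (th ++ [:: 0; - (k%:Z)]) (T - t)))))
                1 (M ^ n))
         [:: aboxf J (fun i =>
                ascale ((T - t) / (M ^ (n - i))%:R)
                  (aboxf J (fun k =>
                     acomp (acomp F (bU (th ++ [:: i%:Z; k%:Z]) i (cU (th ++ [:: i%:Z; k%:Z]) t)))
                           (aff (1%:M : 'M[R]_d)
                                (W (th ++ [:: i%:Z; k%:Z]) (cU (th ++ [:: i%:Z; k%:Z]) t - t))))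
                     1 (M ^ (n - i))))
              0 n.-1;
             aboxf J (fun i =>
                ascale ((t - T) * (0 < i)%N%:R / (M ^ (n - i))%:R)
                  (aboxf J (fun k =>
                     acomp (acomp F (bU (th ++ [:: - (i%:Z); k%:Z]) (maxn i.-1 0)
                                        (cU (th ++ [:: i%:Z; k%:Z]) t)))
                           (aff (1%:M : 'M[R]_d)
                                (W (th ++ [:: i%:Z; k%:Z]) (cU (th ++ [:: i%:Z; k%:Z]) t - t))))
                     1 (M ^ (n - i))))
              0 n.-1]) ->
  forall th th1 th2 n t t1 t2 (x : 'cV[R]_d),
    th != [::] -> th1 != [::] -> th2 != [::] ->
    0 <= t <= T -> 0 <= t1 <= T -> 0 <= t2 <= T ->
    dims (bU th1 n t1) = dims (bU th2 n t2) /\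
    continuous (realization a (bU th n t)) /\
    (alen (bU th n t) <= maxn dd (alen G) + n * ahidden F)%N /\
    (maxdim (bU th n t) <= maxn dd (maxn (maxdim F) (maxdim G)) * (3 * M) ^ n)%N /\
    U th n t x = realn1 a (bU th n t) x /\
    (aparams (bU th n t) <=
           2 * (maxn dd (alen G) + n * ahidden F)
             * (maxn dd (maxn (maxdim F) (maxdim G))) ^ 2 * (3 * M) ^ (2 * n))%N.
Proof.
move=> _ M_gt0 dd_gt0 _ a_cont _ _ _ dimsJ realization_J cU_range U_rec bU0 bU_rec
  th th1 th2 n t t1 t2 x nth nth1 nth2 ht ht1 ht2.
split; first by rewrite !dimsE
  (hdims_bU_eq M_gt0 dd_gt0 dimsJ cU_range bU0 bU_rec n nth1 nth2 ht1 ht2).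
split; first exact: continuous_realization.
split; first exact: (alen_bU_le M_gt0 dd_gt0 dimsJ cU_range bU0 bU_rec n nth ht).
split; first exact: (maxdim_bU_le M_gt0 dd_gt0 dimsJ cU_range bU0 bU_rec n nth ht).
split; first exact: (realization_bU M_gt0 dd_gt0 dimsJ realization_J cU_range U_rec bU0 bU_rec).
exact: (aparams_bU_le M_gt0 dd_gt0 dimsJ cU_range bU0 bU_rec n nth ht).
Qed.
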